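(* Let $K$ be a field of characteristic zero, and let $N_K$ be the number of roots of unity in $K$. Let $F,G\in K[X]$ satisfy $\deg(F)=d>1$ and $F^k=G^k$ for some $k\in\mathbb{N}$. Then $F^n=G^n$ for some $n$ with $1\le n\le N_K$.
   Context: $F^n$ denotes the $n$-th iterate of $F$ under composition; $\mathbb{N}$ is the set of positive integers. *)

From HB Require Import structures.
From mathcomp Require Import all_boot all_order all_algebra.
Set Implicit Arguments. Unset Strict Implicit. Unset Printing Implicit Defensive.
Import GRing.Theory.
Local Open Scope ring_scope.

Definition poly_iter (K : fieldType) (F : {poly K}) (n : nat) : {poly K} :=
  iter n (fun p => F \Po p) 'X.

Definition root_of_unity (K : fieldType) (x : K) : Prop :=
  exists m : nat, (0 < m)%N /\ x ^+ m = 1.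

Definition num_roots_of_unity (K : fieldType) (N : nat) : Prop :=
  exists s : seq K, [/\ uniq s, size s = N &
                        forall x : K, x \in s <-> root_of_unity x].

From HB Require Import structures.
From mathcomp Require Import all_boot all_order all_algebra.
From mathcomp Require Import zify ring.
Import GRing.Theory.
Local Open Scope ring_scope.

Set Implicit Arguments. Unset Strict Implicit. Unset Printing Implicit Defensive.

(* Since lead (F o p) = lead F * (lead p)^d, the leading coefficient of the n-th
   iterate is (lead F)^(s_n), s_n = 1 + d + ... + d^(n-1).  Writing
   lead G = z * lead F, the hypothesis gives z^(s_k) = 1, so the order r of z
   divides s_k = 1 (mod d) and is coprime to d; pigeonholing s_0, ..., s_r
   modulo r yields 1 <= n <= r with r | s_n, and r <= N_K because z has r
   distinct powers.  Now F^n and G^n have equal degree and leading coefficient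
   and both commute with H = F^k = G^k.  If R = F^n - G^n were nonzero, of
   degree e < m = deg F^n, then R o H = H o F^n - H o G^n would have degree
   e * deg H on the left but e + m * (deg H - 1) on the right, the top
   coefficient there being deg H * lead H * (lead F^n)^(deg H - 1) * lead R,
   nonzero in characteristic zero. *)

Section TopCoefficient.
Variable R : comNzRingType.
Implicit Types (p q H P Q : {poly R}) (c u v : R).

Definition top_coef p (n : nat) c := (size p <= n.+1)%N /\ p`_n = c.

Lemma top_coef0 p n : (size p <= n)%N -> top_coef p n 0.
Proof. by move=> sp; split; [exact: leqW | exact: nth_default]. Qed.

Lemma top_coef_lead p n : size p = n.+1 -> top_coef p n (lead_coef p).
Proof. by move=> sp; split; rewrite ?sp // /lead_coef sp. Qed.

Lemma top_coef_size p n : top_coef p n 0 -> (size p <= n)%N.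
Proof.
case=> sp pn0; rewrite leq_eqVlt in sp; case/orP: sp => [/eqP sp|] //.
have /eqP : lead_coef p = 0 by rewrite lead_coefE sp.
by rewrite lead_coef_eq0 => /eqP p0; rewrite p0 size_poly0 in sp.
Qed.

Lemma top_coefD p q n u v :
  top_coef p n u -> top_coef q n v -> top_coef (p + q) n (u + v).
Proof.
move=> [sp pn] [sq qn]; split; last by rewrite coefD pn qn.
by apply: leq_trans (size_polyD _ _) _; rewrite geq_max sp sq.
Qed.

Lemma top_coefN p n u : top_coef p n u -> top_coef (- p) n (- u).
Proof. by case=> sp pn; split; rewrite ?size_polyN ?coefN ?pn. Qed.

Lemma top_coefB p q n u v :
  top_coef p n u -> top_coef q n v -> top_coef (p - q) n (u - v).
Proof. by move=> hp /top_coefN; apply: top_coefD. Qed.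

Lemma top_coefZ p n c u : top_coef p n u -> top_coef (c *: p) n (c * u).
Proof.
case=> sp pn; split; last by rewrite coefZ pn.
exact: leq_trans (size_scale_leq _ _) sp.
Qed.

Lemma top_coefM p q m n u v :
  top_coef p m u -> top_coef q n v -> top_coef (p * q) (m + n) (u * v).
Proof.
move=> [sp pm] [sq qn]; split.
  by apply: leq_trans (size_polyMleq _ _) _; lia.
rewrite coefM (bigD1 (Ordinal (leq_addr n m : (m < (m + n).+1)%N))) //=.
rewrite addKn pm qn big1 ?addr0 // => -[j ltj] /= neq_jm.
have {}neq_jm : j != m by apply: contraNneq neq_jm => eq_jm; apply/eqP/val_inj.
case: (ltngtP j m) neq_jm => // [lt_jm | lt_mj] _.
  by rewrite [q`__]nth_default ?mulr0 //; apply: leq_trans sq _; lia.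
by rewrite [p`__]nth_default ?mul0r //; apply: leq_trans sp lt_mj.
Qed.

Lemma top_coefX p m c n : top_coef p m c -> top_coef (p ^+ n) (m * n) (c ^+ n).
Proof.
move=> hp; elim: n => [|n IHn]; first by rewrite muln0; split; rewrite ?size_poly1 ?coef1.
by rewrite !exprS mulnS; apply: top_coefM.
Qed.

Lemma top_coef_subrXX p q m e c r i :
  top_coef p m c -> top_coef q m c -> top_coef (p - q) e r ->
  top_coef (p ^+ i.+1 - q ^+ i.+1) (e + m * i) (i.+1%:R * c ^+ i * r).
Proof.
move=> hp hq hpq; elim: i => [|i IHi].
  by rewrite !expr1 muln0 addn0 expr0 mulr1 mul1r.
have -> : p ^+ i.+2 - q ^+ i.+2 = p * (p ^+ i.+1 - q ^+ i.+1) + (p - q) * q ^+ i.+1.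
  by rewrite !exprS; ring.
have := top_coefM hpq (top_coefX i.+1 hq); rewrite mulnS addnCA => hpq_q.
have := top_coefD (top_coefM hp IHi) hpq_q.
by rewrite -!natr1 !exprS; congr top_coef; ring.
Qed.

Lemma top_coef_comp_subr H P Q m e c r D :
  size H = D.+2 -> (e < m)%N ->
  top_coef P m c -> top_coef Q m c -> top_coef (P - Q) e r ->
  top_coef ((H \Po P) - (H \Po Q)) (e + m * D) (lead_coef H * (D.+1%:R * c ^+ D * r)).
Proof.
move=> sH lt_em hP hQ hPQ.
rewrite !comp_polyE lead_coefE sH -sumrB big_ord_recr /= -scalerBr.
rewrite -[H`_D.+1 * _]add0r; apply: top_coefD; last first.
  exact: top_coefZ _ (top_coef_subrXX _ hP hQ hPQ).
apply/top_coef0/(leq_trans (size_sum _ _ _))/bigmax_leqP => -[[|i] lt_iD] _ /=.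
  by rewrite !expr0 subrr size_poly0.
rewrite -scalerBr (leq_trans (size_scale_leq _ _)) //.
have [size_PQ _] := top_coef_subrXX i hP hQ hPQ; apply: leq_trans size_PQ _; nia.
Qed.

End TopCoefficient.

Lemma eq_poly_comp_comm (R : idomainType) (H P Q : {poly R}) :
  [pchar R] =i pred0 -> (2 < size H)%N ->
  size P = size Q -> lead_coef P = lead_coef Q ->
  P \Po H = H \Po P -> Q \Po H = H \Po Q -> P = Q.
Proof.
move=> char0 gt2_H eq_sPQ eq_lPQ comm_P comm_Q.
apply/eqP; rewrite -subr_eq0; apply: contraT => nz_PQ.
case sP: (size P) => [|m].
  have /eqP P0 : P == 0 by rewrite -size_poly_eq0 sP.
  have /eqP Q0 : Q == 0 by rewrite -size_poly_eq0 -eq_sPQ sP.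
  by move: nz_PQ; rewrite P0 Q0 subrr eqxx.
set c := lead_coef P.
have hP : top_coef P m c := top_coef_lead sP.
have hQ : top_coef Q m c by rewrite /c eq_lPQ; apply: top_coef_lead; rewrite -eq_sPQ.
have [e sPQ] : exists e, size (P - Q) = e.+1.
  by exists (size (P - Q)).-1; rewrite prednK // lt0n size_poly_eq0.
have lt_em : (e < m)%N.
  by rewrite -ltnS -sPQ; apply: top_coef_size; rewrite -(subrr c); apply: top_coefB.
case sH: (size H) gt2_H => [|[|D]] // gt2_H; have {gt2_H} gt0_D : (0 < D)%N by [].
have nz_top : lead_coef H * (D.+1%:R * c ^+ D * lead_coef (P - Q)) != 0.
  rewrite !mulf_neq0 ?expf_neq0 ?lead_coef_eq0 //.
  - by rewrite -size_poly_eq0 sH.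
  - by have /pcharf0P -> := char0.
  - by rewrite -size_poly_eq0 sP.
have := top_coef_comp_subr sH lt_em hP hQ (top_coef_lead sPQ).
rewrite -comm_P -comm_Q -comp_polyB => -[_]; rewrite nth_default => [/esym/eqP|].
  by rewrite (negbTE nz_top).
apply: leq_trans (size_comp_poly_leq _ _) _; rewrite sPQ sH /=; nia.
Qed.

Definition geom_sum (d n : nat) : nat := (\sum_(i < n) d ^ i)%N.

Lemma geom_sumS d n : geom_sum d n.+1 = (d * geom_sum d n).+1.
Proof.
by rewrite /geom_sum big_ord_recl expn0 big_distrr /=; under eq_bigr do rewrite expnS.
Qed.

Lemma geom_sum_gt0 d n : (0 < n)%N -> (0 < geom_sum d n)%N.
Proof. by case: n => // n _; rewrite geom_sumS. Qed.

Lemma geom_sumD d m n : geom_sum d (m + n) = (geom_sum d m + d ^ m * geom_sum d n)%N.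
Proof.
rewrite /geom_sum big_split_ord big_distrr /=.
by congr addn; apply: eq_bigr => i _; rewrite expnD.
Qed.

Lemma coprime_dvd_geom_sum r d n : (0 < n)%N -> (r %| geom_sum d n)%N -> coprime r d.
Proof.
case: n => // n _ /coprime_dvdl; apply.
by rewrite geom_sumS -coprime_modl -addn1 mulnC modnMDl coprime_modl coprime1n.
Qed.

(* Pigeonhole on the residues of geom_sum d 0, ..., geom_sum d r modulo r. *)
Lemma exists_dvd_geom_sum r d : (0 < r)%N -> coprime r d ->
  exists2 n, (0 < n <= r)%N & (r %| geom_sum d n)%N.
Proof.
move=> gt0_r co_rd.
pose res (i : 'I_r.+1) : 'I_r := Ordinal (ltn_pmod (geom_sum d i) gt0_r).
have [/injectiveP inj_res | ] := boolP (injectiveb res).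
  by have := leq_card res inj_res; rewrite !card_ord ltnn.
move/injectivePn => [i [j neq_ij eq_res]].
wlog lt_ij : i j neq_ij eq_res / (i < j)%N.
  move=> IH; case: (ltngtP i j) => [lt_ij | lt_ji | eq_ij].
  - exact: IH neq_ij eq_res lt_ij.
  - by apply: IH lt_ji; rewrite // eq_sym.
  - by rewrite (val_inj eq_ij) eqxx in neq_ij.
exists (j - i)%N; first by have := ltn_ord j; lia.
move: (congr1 val eq_res) => /= /eqP.
move: (j - i)%N (subnKC (ltnW lt_ij)) => t <-.
rewrite geom_sumD -{1}[geom_sum d i]addn0 eqn_modDl mod0n eq_sym => dvd_r.
by rewrite -(Gauss_dvdr _ (coprimeXr i co_rd)).
Qed.

Section PolyIter.
Variable K : fieldType.
Implicit Types F : {poly K}.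

Lemma poly_iterS F n : poly_iter F n.+1 = F \Po poly_iter F n.
Proof. by []. Qed.

Lemma comp_poly_iter F m n : poly_iter F m \Po poly_iter F n = poly_iter F (m + n).
Proof.
elim: m => [|m IHm]; first exact: comp_polyX.
by rewrite addSn !poly_iterS -comp_polyA IHm.
Qed.

Lemma comp_poly_iterC F m n :
  poly_iter F m \Po poly_iter F n = poly_iter F n \Po poly_iter F m.
Proof. by rewrite !comp_poly_iter addnC. Qed.

Lemma size_poly_iter F n : (size (poly_iter F n)).-1 = ((size F).-1 ^ n)%N.
Proof.
elim: n => [|n IHn]; first by rewrite size_polyX.
by rewrite poly_iterS size_comp_poly IHn expnS.
Qed.

Lemma size_poly_iter_nonconst F n :
  (1 < size F)%N -> size (poly_iter F n) = ((size F).-1 ^ n).+1.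
Proof.
by move=> gt1_F; have := size_poly_iter F n; have := expn_gt0 (size F).-1 n; lia.
Qed.

Lemma lead_coef_poly_iter F n : (1 < size F)%N ->
  lead_coef (poly_iter F n) = lead_coef F ^+ geom_sum (size F).-1 n.
Proof.
move=> gt1_F; elim: n => [|n IHn]; first by rewrite lead_coefX /geom_sum big_ord0.
have gt1_iter : (1 < size (poly_iter F n))%N.
  by rewrite size_poly_iter_nonconst // ltnS expn_gt0; apply/orP; left; lia.
by rewrite poly_iterS lead_coef_comp // IHn geom_sumS exprS -exprM mulnC.
Qed.

End PolyIter.

Lemma prim_order_le_num_roots_of_unity (K : fieldType) (z : K) r N :
  r.-primitive_root z -> num_roots_of_unity K N -> (r <= N)%N.
Proof.
move=> prim_z [s [uniq_s <- mem_s]].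
rewrite -(size_iota 0 r) -(size_map (fun i => z ^+ i)); apply: uniq_leq_size.
  rewrite map_inj_in_uniq ?iota_uniq // => i j; rewrite !mem_iota !add0n => lt_ir lt_jr.
  by move/eqP; rewrite (eq_prim_root_expr prim_z) !modn_small // => /eqP.
move=> _ /mapP[i _ ->]; apply/mem_s; exists r; split; first exact: prim_order_gt0 prim_z.
by rewrite exprAC (prim_expr_order prim_z) expr1n.
Qed.

Unset Implicit Arguments.

Theorem corollary6p4 (K : fieldType) (F G : {poly K}) (k : nat) :
  [pchar K] =i pred0 ->
  (2 < size F)%N ->
  (0 < k)%N ->
  poly_iter F k = poly_iter G k ->
  exists n : nat,
    [/\ (1 <= n)%N,
        (forall N : nat, num_roots_of_unity K N -> (n <= N)%N) &
        poly_iter F n = poly_iter G n].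
Proof.
move=> char0 gt2_F gt0_k eq_k; set d := (size F).-1.
have deg_G : (size G).-1 = d.
  by apply/eqP; rewrite -(eqn_exp2r _ _ gt0_k) -size_poly_iter -eq_k size_poly_iter.
have gt1_F : (1 < size F)%N by lia.
have gt1_G : (1 < size G)%N by rewrite /d in deg_G; lia.
have nz_F : lead_coef F != 0 by rewrite lead_coef_eq0 -size_poly_eq0; lia.
set z := lead_coef G / lead_coef F.
have lead_iterG n :
    lead_coef (poly_iter G n) = z ^+ geom_sum d n * lead_coef (poly_iter F n).
  by rewrite !lead_coef_poly_iter // deg_G -exprMn divfK.
have z_k : z ^+ geom_sum d k = 1.
  apply: (mulIf (x := lead_coef (poly_iter F k))); last by rewrite -lead_iterG eq_k mul1r.
  by rewrite lead_coef_eq0 -size_poly_eq0 size_poly_iter_nonconst.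
have [r prim_z dvd_r] := prim_order_exists (geom_sum_gt0 _ gt0_k) z_k.
have [n /andP[gt0_n le_nr] dvd_rn] :=
  exists_dvd_geom_sum (prim_order_gt0 prim_z) (coprime_dvd_geom_sum gt0_k dvd_r).
exists n; split => //.
  by move=> N /(prim_order_le_num_roots_of_unity prim_z); apply: leq_trans.
apply: (@eq_poly_comp_comm _ (poly_iter F k)) => //.
- rewrite size_poly_iter_nonconst // ltnS -/d.
  by rewrite (leq_trans _ (leq_pexp2l _ gt0_k)) ?expn1 //; rewrite /d; lia.
- by rewrite !size_poly_iter_nonconst // deg_G.
- by rewrite lead_iterG -(prim_expr_mod prim_z) (eqP dvd_rn) mul1r.
- exact: comp_poly_iterC.
- by rewrite eq_k comp_poly_iterC.
Qed.
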